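(* Let $\nu,m_1,m_2,t$ be positive integers with $\nu>m_i\ge t+1$ for $i\in\{1,2\}$. Then $$c_1(\nu,m_1,m_2,t)>s_0(\nu,m_1,m_2+1,t)\,N'(t;m_2;2\nu).$$ Moreover, if additionally $2\nu\ge m_1+2m_2-t+4$, then $$c_1(\nu,m_1,m_2,t)>\left({m_2-t+1\brack 1}-q^{-2}\right)N'(t+1;m_1;2\nu)\,N'(t;m_2;2\nu).$$
   Context: Let $q$ be a prime power, $\nu\ge 1$ an integer, and $f$ a non-degenerate alternating bilinear form on $V=\mathbb F_q^{2\nu}$. A subspace $W\le V$ is totally isotropic if $f(x,y)=0$ for all $x,y\in W$. For $0\le m\le \nu$, $\mathcal P_m$ denotes the set of all $m$-dimensional totally isotropic subspaces of $V$; ${A\brack k}$ is the set of $k$-dimensional subspaces of a subspace $A$. Gaussian binomial coefficient: ${n\brack k}=\prod_{i=0}^{k-1}\frac{q^{n-i}-1}{q^{k-i}-1}$, ${n\brack 0}=1$, ${n\brack k}=0$ for $k<0$. For integers $0\le a\le m\le\nu$, $N'(a;m;2\nu)=\prod_{i=1}^{m-a}\frac{q^{2(\nu-m+i)}-1}{q^{i}-1}$ (the number of members of $\mathcal P_m$ containing a fixed member of $\mathcal P_a$). For $M\in\mathcal P_{m_2+1}$ and a $t$-dimensional subspace $T\subseteq M$ let $\mathcal C_1(M,T;m_1,t)=\{F\in\mathcal P_{m_1}: T\subseteq F,\ \dim(F\cap M)\ge t+1\}$ and $\mathcal C_2(M,T;m_2)=\{F\in\mathcal P_{m_2}: T\subseteq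 F\}\cup{M\brack m_2}$. The product $|\mathcal C_1(M,T;m_1,t)|\cdot|\mathcal C_2(M,T;m_2)|$ does not depend on the choice of $M,T$; it is denoted $c_1(\nu,m_1,m_2,t)$. Also $s_0(\nu,m,s,t)={s-t\brack 1}N'(t+1;m;2\nu)-q{s-t\brack 2}N'(t+2;m;2\nu)$. *)

From mathcomp Require Import all_boot all_order all_algebra.
Set Implicit Arguments. Unset Strict Implicit. Unset Printing Implicit Defensive.
Import GRing.Theory Num.Theory.
Local Open Scope ring_scope.

(* Gaussian binomial coefficient [n brack k]_q as a rational, q given as nat. *)
Definition gbin (q n k : nat) : rat :=
  \prod_(i < k) (((q%:R : rat) ^+ (n - i) - 1) / ((q%:R : rat) ^+ (k - i) - 1)).

(* N'(a; m; 2nu): number of members of P_m containing a fixed member of P_a.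
   For a > m this count is 0 (convention). *)
Definition Nprime (q a m nu : nat) : rat :=
  if (a <= m)%N then
    \prod_(1 <= i < (m - a).+1)
       (((q%:R : rat) ^+ (2 * (nu - m + i)) - 1) / ((q%:R : rat) ^+ i - 1))
  else 0.

Definition s0 (q nu m s t : nat) : rat :=
  gbin q (s - t) 1 * Nprime q t.+1 m nu
  - (q%:R : rat) * gbin q (s - t) 2 * Nprime q t.+2 m nu.

Section Symplectic.
Variables (F : finFieldType) (n : nat) (B : 'M[F]_n).

Definition form (x y : 'rV[F]_n) : F := (x *m B *m y^T) 0 0.

(* subspaces of F^n are represented canonically by matrices A with <<A>> = A;
   the subspace is the row space of A *)
Definition is_subspace (A : 'M[F]_n) : bool := (<<A>>%MS == A).

Definition tot_iso (A : 'M[F]_n) : bool :=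
  [forall x : 'rV[F]_n, forall y : 'rV[F]_n,
     ((x <= A)%MS && (y <= A)%MS) ==> (form x y == 0)].

Definition Pm (m : nat) : {set 'M[F]_n} :=
  [set A | [&& is_subspace A, \rank A == m & tot_iso A]].

Definition subsp_of (A : 'M[F]_n) (k : nat) : {set 'M[F]_n} :=
  [set W | [&& is_subspace W, \rank W == k & (W <= A)%MS]].

Definition C1 (M T : 'M[F]_n) (m1 t : nat) : {set 'M[F]_n} :=
  [set W in Pm m1 | (T <= W)%MS && (t.+1 <= \rank (W :&: M)%MS)%N].

Definition C2 (M T : 'M[F]_n) (m2 : nat) : {set 'M[F]_n} :=
  [set W in Pm m2 | (T <= W)%MS] :|: subsp_of M m2.

End Symplectic.

Definition alt_form (F : finFieldType) (n : nat) (B : 'M[F]_n) : Prop :=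
  forall x : 'rV[F]_n, form B x x = 0.

Definition nondegen_form (F : finFieldType) (n : nat) (B : 'M[F]_n) : Prop :=
  forall x : 'rV[F]_n, (forall y : 'rV[F]_n, form B x y = 0) -> x = 0.

From Pilot Require Import Defs.
From mathcomp Require Import all_boot all_order all_algebra mxabelem.
From mathcomp Require Import ring lra zify.
Set Implicit Arguments. Unset Strict Implicit. Unset Printing Implicit Defensive.
Import Order.TTheory GRing.Theory Num.Theory.
Local Open Scope ring_scope.

(* N'(a;m;2nu) is obtained by double counting flags: the totally isotropic
   (a+1)-spaces above an isotropic a-space U are the (a+1)-spaces between U and
   its orthogonal U^perp, of which there are [2nu-2a brack 1].
   C2 contains the N'(t;m2;2nu) isotropic m2-spaces above T together with a
   hyperplane of M missing T, so |C2| > N'(t;m2;2nu).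
   For an isotropic m1-space W above T, the number of (t+1)-spaces between T and
   W :&: M minus q times the number of (t+2)-spaces between them is at most 1, and
   at most 0 unless W is in C1; summing over all such W and double counting gives
   |C1| >= s0(nu,m1,m2+1,t) > 0.  The second bound compares the two terms of
   s0 using N'(t+1) [m1-t-1 brack 1] = [2nu-2t-2 brack 1] N'(t+2). *)

Section GaussianBinomial.
Variable q : nat.
Hypothesis q_gt1 : (1 < q)%N.
Local Notation qr := (q%:R : rat).
Local Notation g d := (gbin q d 1).

Lemma qr_gt1 : 1 < qr. Proof. by rewrite ltr1n. Qed.

Lemma qr_ge2 : 2 <= qr. Proof. by rewrite ler_nat. Qed.

Lemma gbin1E d : g d = (qr ^+ d - 1) / (qr - 1).
Proof. by rewrite /gbin big_ord1 subn0. Qed.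

Lemma gbin1S d : g d.+1 = 1 + qr * g d.
Proof.
have q1 : qr - 1 != 0 by rewrite subr_eq0 gt_eqF ?qr_gt1.
by rewrite !gbin1E exprS; field.
Qed.

Lemma gbin10 : g 0 = 0.
Proof. by rewrite gbin1E expr0 subrr mul0r. Qed.

Lemma gbin1_ge0 d : 0 <= g d.
Proof.
elim: d => [|d IH]; first by rewrite gbin10.
by rewrite gbin1S addr_ge0 // mulr_ge0.
Qed.

Lemma gbin1_gt0 d : (0 < d)%N -> 0 < g d.
Proof. by case: d => // d _; rewrite gbin1S ltr_pwDl // mulr_ge0 ?gbin1_ge0. Qed.

Lemma gbin1_ge_exp d j : qr ^+ j * g d <= g (d + j).
Proof.
elim: j => [|j IH]; first by rewrite mul1r addn0.
rewrite addnS gbin1S exprS -mulrA ler_wpDl //.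
by rewrite ler_wpM2l // ltW // (lt_trans ltr01 qr_gt1).
Qed.

Lemma gbin1_le d e : (d <= e)%N -> g d <= g e.
Proof.
move=> /subnKC <-; apply: le_trans (gbin1_ge_exp d (e - d)).
by rewrite ler_peMl ?gbin1_ge0 // exprn_ege1 // ltW // qr_gt1.
Qed.

Lemma gbin1_mul_le d e : g d * g e <= g (d + e).
Proof.
have q1 := qr_gt1; have q10 : 0 < qr - 1 by rewrite subr_gt0.
have u1 : 1 <= qr ^+ d by rewrite exprn_ege1 // ltW.
have v1 : 1 <= qr ^+ e by rewrite exprn_ege1 // ltW.
rewrite !gbin1E exprD -subr_ge0.
have -> : (qr ^+ d * qr ^+ e - 1) / (qr - 1) - (qr ^+ d - 1) / (qr - 1) * ((qr ^+ e - 1) / (qr - 1))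
   = ((qr - 2) * (qr ^+ d * qr ^+ e - 1) + (qr ^+ d - 1) + (qr ^+ e - 1)) / (qr - 1) ^+ 2.
  by field; rewrite gt_eqF.
apply: divr_ge0; last exact: exprn_ge0 (ltW q10).
have uv1 : 1 <= qr ^+ d * qr ^+ e by rewrite -exprD exprn_ege1 // ltW.
have : 0 <= (qr - 2) * (qr ^+ d * qr ^+ e - 1) by rewrite mulr_ge0 ?subr_ge0 ?qr_ge2.
lra.
Qed.

Lemma gbin2E d : gbin q d 2 = g d * g d.-1 / g 2.
Proof.
have q1 : qr - 1 != 0 by rewrite subr_eq0 gt_eqF ?qr_gt1.
have qq1 : qr ^+ 2 - 1 != 0 by rewrite subr_eq0 gt_eqF // exprn_egt1 ?qr_gt1.
rewrite [gbin q d 2]/gbin !big_ord_recr big_ord0 /= !gbin1E subn0 subn1 subSnn.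
by field; rewrite q1 qq1.
Qed.

Lemma gbin1_sub_gbin2_le d : g d - qr * gbin q d 2 <= (0 < d)%:R.
Proof.
case: d => [|d]; first by rewrite gbin2E gbin10 !mul0r mulr0 subrr.
rewrite gbin2E /= {1}gbin1S -addrA gerDl subr_le0 ler_pM2l ?(lt_trans ltr01 qr_gt1) //.
case: d => [|d]; first by rewrite gbin10 mulr0 mul0r.
rewrite ler_pdivlMr ?gbin1_gt0 // mulrC ler_wpM2r ?gbin1_ge0 //.
exact: gbin1_le.
Qed.

Lemma Nprime_ge0 nu a m : 0 <= Nprime q a m nu.
Proof.
rewrite /Nprime; case: ifP => // _; rewrite big_nat_cond; apply: prodr_ge0 => i.
by move=> _; apply: divr_ge0; rewrite subr_ge0 exprn_ege1 // ltW // qr_gt1.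
Qed.

Lemma Nprime_gt0 nu a m : (a <= m)%N -> 0 < Nprime q a m nu.
Proof.
move=> am; rewrite /Nprime am big_nat_cond; apply: prodr_gt0 => i.
case/andP=> /andP[i1 _] _.
by apply: divr_gt0; rewrite subr_gt0 exprn_egt1 ?qr_gt1 //; lia.
Qed.

Lemma Nprime_id nu a : Nprime q a a nu = 1.
Proof. by rewrite /Nprime leqnn subnn big_geq. Qed.

Lemma Nprime_succ_id nu a : Nprime q a.+1 a nu = 0.
Proof. by rewrite /Nprime ltnn. Qed.

Lemma Nprime_step nu a m : (a < m)%N -> (m <= nu)%N ->
  Nprime q a m nu * g (m - a) = g (2 * (nu - a)) * Nprime q a.+1 m nu.
Proof.
move=> am mnu; rewrite /Nprime am (ltnW am) subnSK // big_nat_recr ?subn_gt0 //=.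
have q1 : qr - 1 != 0 by rewrite subr_eq0 gt_eqF ?qr_gt1.
have ma : qr ^+ (m - a) - 1 != 0 by rewrite subr_eq0 gt_eqF // exprn_egt1 ?qr_gt1 // -lt0n subn_gt0.
have -> : (nu - m + (m - a) = nu - a)%N by lia.
by rewrite !gbin1E; field; rewrite q1 ma.
Qed.

Lemma gbin1_mul_lt d e A : (d + e < A)%N -> qr * (g d * g e) < g A * g 2.
Proof.
move=> deA; have g2_ge1 : 1 <= g 2 by rewrite gbin1S lerDl mulr_ge0 ?gbin1_ge0.
apply: (le_lt_trans (ler_wpM2l _ (gbin1_mul_le d e))); first exact: ler0n.
apply: (lt_le_trans _ (ler_peMr (gbin1_ge0 A) g2_ge1)).
by rewrite (lt_le_trans _ (gbin1_le deA)) // gbin1S ltrDr.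
Qed.

Lemma gbin1_mul3_le c d e A : (c + d + e + 2 <= A)%N ->
  qr ^+ 3 * (g c * g d * g e) <= g A * g 2.
Proof.
move=> cdeA; have q0 : 0 <= qr by exact: ler0n.
have g2_geq : qr <= g 2 by rewrite gbin1S gbin1S gbin10 mulr0 addr0 mulr1 lerDr.
apply: (le_trans (ler_wpM2l (exprn_ge0 3 q0) (_ : _ <= g (c + d + e)))).
  apply: le_trans (gbin1_mul_le _ _); rewrite ler_wpM2r ?gbin1_ge0 //; exact: gbin1_mul_le.
rewrite exprS -mulrA [g A * _]mulrC ler_pM ?mulr_ge0 ?exprn_ge0 ?gbin1_ge0 //.
exact: le_trans (gbin1_ge_exp _ 2) (gbin1_le cdeA).
Qed.

Lemma Nprime_succ_ratio nu t m : (t.+1 < m)%N -> (m <= nu)%N ->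
  Nprime q t.+1 m nu = Nprime q t.+2 m nu * g (2 * (nu - t.+1)) / g (m - t.+1).
Proof.
move=> tm mnu; have gb : g (m - t.+1) != 0 by rewrite gt_eqF // gbin1_gt0 // subn_gt0.
by apply: (mulIf gb); rewrite mulfVK // Nprime_step // mulrC.
Qed.

Lemma s0_gt0 nu m1 m2 t : (t < m1 < nu)%N -> (t < m2 < nu)%N ->
  0 < s0 q nu m1 m2.+1 t.
Proof.
case/andP=> tm1 m1nu /andP[tm2 m2nu]; rewrite /s0 gbin2E subSn ?(ltnW tm2) //=.
set k := (m2 - t)%N.
have [-> | m1t] := eqVneq m1 t.+1.
  by rewrite Nprime_id Nprime_succ_id mulr0 subr0 mulr1 gbin1_gt0.
have tm1' : (t.+1 < m1)%N by rewrite ltn_neqAle eq_sym m1t tm1.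
rewrite Nprime_succ_ratio ?(ltnW m1nu) //.
set gA := g (2 * (nu - t.+1)); set gb := g (m1 - t.+1); set N2 := Nprime q t.+2 m1 nu.
have gb0 : 0 < gb by rewrite gbin1_gt0 // subn_gt0.
have g20 : 0 < g 2 by rewrite gbin1_gt0.
have -> : g k.+1 * (N2 * gA / gb) - qr * (g k.+1 * g k / g 2) * N2
    = g k.+1 * N2 * (gA * g 2 - qr * (g k * gb)) / (gb * g 2).
  by field; rewrite !gt_eqF.
rewrite divr_gt0 ?mulr_gt0 ?gbin1_gt0 ?Nprime_gt0 ?subr_gt0 ?gbin1_mul_lt //; lia.
Qed.

Lemma s0_ge nu m1 m2 t : (t < m1 < nu)%N -> (t < m2 < nu)%N ->
  (m1 + 2 * m2 - t + 4 <= 2 * nu)%N ->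
  (g (m2 - t + 1) - qr ^- 2) * Nprime q t.+1 m1 nu <= s0 q nu m1 m2.+1 t.
Proof.
case/andP=> tm1 m1nu /andP[tm2 m2nu] hnu.
rewrite /s0 gbin2E addn1 subSn ?(ltnW tm2) //= mulrBl lerD2l lerN2.
set k := (m2 - t)%N.
have q0 : 0 < qr by rewrite (lt_trans ltr01 qr_gt1).
have [-> | m1t] := eqVneq m1 t.+1.
  by rewrite Nprime_id Nprime_succ_id mulr0 mulr1 invr_ge0 exprn_ge0 // ltW.
have tm1' : (t.+1 < m1)%N by rewrite ltn_neqAle eq_sym m1t tm1.
rewrite (@Nprime_succ_ratio _ t) ?(ltnW m1nu) //.
set gA := g (2 * (nu - t.+1)); set gb := g (m1 - t.+1); set N2 := Nprime q t.+2 m1 nu.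
have gb0 : 0 < gb by rewrite gbin1_gt0 // subn_gt0.
have g20 : 0 < g 2 by rewrite gbin1_gt0.
rewrite -subr_ge0.
have -> : qr ^- 2 * (N2 * gA / gb) - qr * (g k.+1 * g k / g 2) * N2
    = N2 * (gA * g 2 - qr ^+ 3 * (g k.+1 * g k * gb)) / (qr ^+ 2 * gb * g 2).
  by field; rewrite !gt_eqF.
rewrite divr_ge0 ?mulr_ge0 ?exprn_ge0 ?Nprime_ge0 ?subr_ge0 ?gbin1_mul3_le ?ltW //; lia.
Qed.

End GaussianBinomial.

Lemma card_setI_sum (K : finType) (Z : {set K}) (P : pred K) :
  #|[set z in Z | P z]| = (\sum_(z in Z) P z)%N.
Proof.
rewrite -sum1_card big_mkcond [RHS]big_mkcond; apply: eq_bigr => z _.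
by rewrite !inE; case: (z \in Z); case: (P z).
Qed.

Lemma double_count (I J : finType) (X : {set I}) (Y : {set J}) (R : I -> J -> bool) :
  (\sum_(x in X) #|[set y in Y | R x y]| = \sum_(y in Y) #|[set x in X | R x y]|)%N.
Proof.
rewrite (eq_bigr _ (fun x _ => card_setI_sum Y (R x))).
rewrite (eq_bigr _ (fun y _ => card_setI_sum X (R^~ y))).
exact: exchange_big.
Qed.

Section SubspacesBetween.
Variables (F : finFieldType) (n : nat).
Local Notation q := #|F|.
Implicit Types (A T X : 'M[F]_n) (x : 'rV[F]_n).

Definition subsp_between T A (k : nat) : {set 'M[F]_n} :=
  [set X | [&& is_subspace X, \rank X == k, (T <= X)%MS & (X <= A)%MS]].

Lemma in_subsp_between T A k X :
  (X \in subsp_between T A k) = [&& is_subspace X, \rank X == k, (T <= X)%MS & (X <= A)%MS].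
Proof. by rewrite inE. Qed.

Lemma is_subspace_genmx (A : 'M[F]_n) : is_subspace <<A>>%MS.
Proof. by rewrite /is_subspace genmx_id. Qed.

Lemma subspace_eq_rank A X : is_subspace A -> is_subspace X ->
  (A <= X)%MS -> \rank A = \rank X -> A = X.
Proof.
move=> /eqP sA /eqP sX AX rAX; rewrite -sA -sX; apply/genmxP.
by rewrite -(mxrank_leqif_eq AX) rAX.
Qed.

Lemma mxrank_adds_row T x : ~~ (x <= T)%MS -> \rank (T + x)%MS = (\rank T).+1.
Proof.
move=> xT; apply/eqP; rewrite eqn_leq; apply/andP; split.
  apply: leq_trans (mxrank_adds_leqif T x) _.
  by rewrite -[(\rank T).+1]addn1 leq_add2l rank_leq_row.
rewrite (ltn_leqif (mxrank_leqif_sup (addsmxSl T x))).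
by apply: contra xT; apply: submx_trans (addsmxSr T x).
Qed.

Lemma card_rowgD T A : (T <= A)%MS ->
  #|rowg A :\: rowg T| = (q ^ \rank A - q ^ \rank T)%N.
Proof. by move=> TA; rewrite cardsD (setIidPr _) ?rowgS // !card_rowg. Qed.

Lemma genmx_adds_row_eq T X x : is_subspace X -> \rank X = (\rank T).+1 ->
  (T <= X)%MS -> (<<(T + x)%MS>>%MS == X) = (x \in rowg X :\: rowg T).
Proof.
move=> sX rX TX; rewrite !inE; apply/eqP/andP => [eX | [xT xX]].
  rewrite -eX genmxE in rX *; rewrite genmxE addsmxSr; split => //; apply/negP => xT.
  move: rX; rewrite (eqmx_rank (_ : (T + x == T)%MS)) => [/n_Sn //|].
  by rewrite addsmx_sub submx_refl xT addsmxSl.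
apply: subspace_eq_rank => //; first exact: is_subspace_genmx.
  by rewrite genmxE addsmx_sub TX.
by rewrite genmxE mxrank_adds_row.
Qed.

Lemma card_between_succ_nat T A : (T <= A)%MS ->
  (#|subsp_between T A (\rank T).+1| * (q ^ (\rank T).+1 - q ^ \rank T))%N
  = (q ^ \rank A - q ^ \rank T)%N.
Proof.
move=> TA; rewrite -card_rowgD // -[#|rowg A :\: _|]sum1_card.
rewrite (partition_big (fun x => <<(T + x)%MS>>%MS)
                       (fun X => X \in subsp_between T A (\rank T).+1)).
  rewrite -sum_nat_const; apply: eq_bigr => X; rewrite in_subsp_between.
  case/and4P=> sX /eqP rX TX XA; rewrite -rX -card_rowgD // -sum1_card.
  apply: eq_bigl => x; rewrite genmx_adds_row_eq // andb_idl // !inE.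
  by case/andP=> -> xX; rewrite (submx_trans xX XA).
move=> x; rewrite !inE => /andP[xT xA].
by rewrite is_subspace_genmx !genmxE mxrank_adds_row // eqxx addsmxSl addsmx_sub TA.
Qed.

Lemma card_between_succ T A : (T <= A)%MS ->
  #|subsp_between T A (\rank T).+1|%:R = gbin q (\rank A - \rank T) 1.
Proof.
move=> TA; have q1 := card_finNzRing_gt1 F.
have qt0 : (q ^ \rank T < q ^ (\rank T).+1)%N by rewrite ltn_exp2l.
move/(congr1 (fun k => k%:R : rat)): (card_between_succ_nat TA).
rewrite natrM !natrB ?leq_pexp2l ?(ltnW q1) ?mxrankS ?(ltnW qt0) // !natrX.
move/(canRL (mulfK _)) => ->; last by rewrite subr_eq0 gt_eqF // ltr_eXn2l // ltr1n.
rewrite gbin1E // -(subnKC (mxrankS TA)) addKn exprD exprS.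
have q10 : (q%:R - 1 : rat) != 0 by rewrite subr_eq0 gt_eqF ?ltr1n.
have qt : (q%:R ^+ \rank T : rat) != 0 by rewrite expf_neq0 // pnatr_eq0 -lt0n ltnW.
by field; rewrite q10 -[X in _ - X]mul1r -mulrBl mulf_neq0.
Qed.

Lemma card_between_succ2 T A : (T <= A)%MS ->
  #|subsp_between T A (\rank T).+2|%:R = gbin q (\rank A - \rank T) 2.
Proof.
move=> TA; have q1 := card_finNzRing_gt1 F.
have := double_count (subsp_between T A (\rank T).+1) (subsp_between T A (\rank T).+2)
  (fun P U => (P <= U)%MS).
have planesE P : P \in subsp_between T A (\rank T).+1 ->
    [set U in subsp_between T A (\rank T).+2 | (P <= U)%MS]
    = subsp_between P A (\rank P).+1.
  rewrite in_subsp_between => /and4P[_ /eqP -> TP _]; apply/setP => U.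
  rewrite !inE; apply/idP/idP => [/andP[/and4P[-> -> _ ->] ->] //|].
  by case/and4P=> -> -> PU ->; rewrite (submx_trans TP PU).
have linesE U : U \in subsp_between T A (\rank T).+2 ->
    [set P in subsp_between T A (\rank T).+1 | (P <= U)%MS]
    = subsp_between T U (\rank T).+1.
  rewrite in_subsp_between => /and4P[_ _ _ UA]; apply/setP => P.
  rewrite !inE; apply/idP/idP => [/andP[/and4P[-> -> -> _] ->] //|].
  by case/and4P=> -> -> -> PU; rewrite PU (submx_trans PU UA).
move/(congr1 (fun k => k%:R : rat)); rewrite !natr_sum.
rewrite (eq_bigr (fun _ => gbin q (\rank A - (\rank T).+1) 1)); last first.
  move=> P HP; have := HP; rewrite in_subsp_between => /and4P[_ /eqP rP _ PA].
  by rewrite planesE // card_between_succ // rP.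
rewrite [RHS](eq_bigr (fun _ => gbin q 2 1)); last first.
  move=> U HU; have := HU; rewrite in_subsp_between => /and4P[_ /eqP rU TU _].
  by rewrite linesE // card_between_succ // rU subSn // subSnn.
rewrite !sumr_const -(mulr_natl (gbin _ (_ - _) 1)) -(mulr_natl (gbin _ 2 1)).
rewrite card_between_succ // => /esym/(canRL (mulfK _)) ->.
  by rewrite gbin2E // subnS.
by rewrite gt_eqF // gbin1_gt0.
Qed.

Lemma subsp_between_capmx T M (W : 'M[F]_n) k :
  [set P in subsp_between T M k | (P <= W)%MS] = subsp_between T (W :&: M)%MS k.
Proof.
apply/setP => P; rewrite !inE sub_capmx.
by apply/idP/idP => [/andP[/and4P[-> -> -> ->] ->] // | /and4P[-> -> -> /andP[-> ->]]].
Qed.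

(* The intersection of M with a coordinate hyperplane [x_j = 0] on which
   some row of T does not vanish. *)
Lemma exists_hyperplane_notsup M r T : is_subspace M -> \rank M = r.+1 ->
  (T <= M)%MS -> T != 0 -> exists2 H, H \in subsp_of M r & ~~ (T <= H)%MS.
Proof.
move=> sM rM TM T0.
have [i /existsP[j Tij]] : exists i, [exists j, T i j != 0].
  apply/existsP; apply: contraR T0 => /existsPn T0; apply/eqP/matrixP => i j.
  by rewrite mxE; apply/eqP; move/existsPn: (T0 i) => /(_ j)/negPn.
pose K := kermx (delta_mx j (0 : 'I_1) : 'M[F]_(n, 1)).
have inK (x : 'rV[F]_n) : (x <= K)%MS = (x 0 j == 0).
  rewrite sub_kermx -colE; apply/eqP/eqP => [/rowP/(_ 0) | xj0]; first by rewrite !mxE.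
  by apply/rowP => a; rewrite !ord1 !mxE.
have vK : ~~ (row i T <= K)%MS by rewrite inK mxE.
have vM : (row i T <= M)%MS by apply: submx_trans (row_sub i T) TM.
have rK : \rank K = n.-1.
  rewrite mxrank_ker (_ : \rank _ = 1%N) ?subn1 //; apply/eqP.
  rewrite eqn_leq rank_leq_col lt0n mxrank_eq0; apply/eqP => /matrixP/(_ j 0).
  by rewrite !mxE !eqxx => /eqP; rewrite oner_eq0.
have rMK : \rank (M :&: K)%MS = r.
  have : (\rank (M :&: K)%MS < \rank M)%N.
    rewrite (ltn_leqif (mxrank_leqif_sup (capmxSl M K))); apply: contra vK => MK.
    exact: submx_trans vM (submx_trans MK (capmxSr M K)).
  have := mxrank_sum_cap M K; have := rank_leq_col (M + K)%MS.
  rewrite rM rK; lia.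
exists <<(M :&: K)%MS>>%MS.
  by rewrite inE is_subspace_genmx !genmxE rMK eqxx capmxSl.
apply: contra vK; rewrite genmxE => /(submx_trans (row_sub i T))/submx_trans; apply.
exact: capmxSr.
Qed.

End SubspacesBetween.

Lemma mulmx_tr_entry (R : comNzRingType) (m n k : nat) (X : 'M[R]_(m, n))
    (C : 'M[R]_n) (Y : 'M[R]_(k, n)) i j :
  (X *m C *m Y^T) i j = (row i X *m C *m (row j Y)^T) 0 0.
Proof.
rewrite tr_row colE mulmxA -colE -!row_mul !mxE; apply: eq_bigr => l _.
by rewrite !mxE; congr (_ * _); apply: eq_bigr => l2 _; rewrite !mxE.
Qed.

Section PolarSpace.
Variables (F : finFieldType) (n : nat) (B : 'M[F]_n).
Hypothesis Balt : alt_form B.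
Hypothesis Bnd : nondegen_form B.
Implicit Types (U W X : 'M[F]_n) (x y z : 'rV[F]_n).
Local Notation form := Defs.form.

Definition gram m (A : 'M[F]_(m, n)) : 'M[F]_m := A *m B *m A^T.

Lemma formDl x y z : form B (x + y) z = form B x z + form B y z.
Proof. by rewrite /form !mulmxDl mxE. Qed.

Lemma formDr x y z : form B x (y + z) = form B x y + form B x z.
Proof. by rewrite /form linearD /= mulmxDr mxE. Qed.

Lemma form_skew x y : form B x y = - form B y x.
Proof.
apply/eqP; rewrite -subr_eq0 opprK; apply/eqP.
by have := Balt (x + y); rewrite formDl !formDr Balt (Balt y) add0r addr0.
Qed.

Lemma trmx_skew : B^T = - B.
Proof.
apply/matrixP => i j; rewrite !mxE.
have formE k l : B k l = form B (row k 1%:M) (row l 1%:M).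
  by rewrite /form -mulmx_tr_entry trmx1 mulmx1 mul1mx.
by rewrite !formE form_skew.
Qed.

Lemma gram_sub0 m1 m2 (A : 'M[F]_(m1, n)) (C : 'M[F]_(m2, n)) :
  (A <= C)%MS -> gram C = 0 -> gram A = 0.
Proof.
rewrite /gram => /submxP[D ->] CBC.
by rewrite trmx_mul !mulmxA -(mulmxA D) -(mulmxA D) CBC mulmx0 mul0mx.
Qed.

Lemma tot_isoE U : tot_iso B U = (gram U == 0).
Proof.
apply/forallP/eqP => [isoU | UBU x].
  apply/matrixP => i j; rewrite mulmx_tr_entry [RHS]mxE.
  by have /forallP/(_ (row j U)) := isoU (row i U); rewrite !row_sub => /eqP.
apply/forallP => y; apply/implyP => /andP[/submxP[D ->] /submxP[E ->]].
move: UBU; rewrite /gram /form => UBU.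
by rewrite trmx_mul !mulmxA -(mulmxA D) -(mulmxA D) UBU mulmx0 mul0mx mxE.
Qed.

Lemma tot_iso_sub U W : (U <= W)%MS -> tot_iso B W -> tot_iso B U.
Proof. by rewrite !tot_isoE => UW /eqP; move/(gram_sub0 UW) ->. Qed.

Definition perp U : 'M[F]_n := kermx (B *m U^T).

Lemma sub_perp m (X : 'M[F]_(m, n)) U : (X <= perp U)%MS = (X *m B *m U^T == 0).
Proof. by rewrite sub_kermx mulmxA. Qed.

Lemma row_free_form : row_free B.
Proof.
rewrite -kermx_eq0; apply/eqP/row_matrixP => i; rewrite row0.
have kerB : row i (kermx B) *m B = 0 by rewrite -row_mul mulmx_ker row0.
by apply: Bnd => y; rewrite /form kerB mul0mx mxE.
Qed.

Lemma mxrank_perp U : \rank (perp U) = (n - \rank U)%N.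
Proof.
rewrite mxrank_ker -mxrank_tr trmx_mul trmxK mxrankMfree //.
by rewrite row_free_unit unitmx_tr -row_free_unit row_free_form.
Qed.

Lemma tot_iso_sub_perp U : tot_iso B U -> (U <= perp U)%MS.
Proof. by rewrite sub_perp tot_isoE. Qed.

(* The Gram matrix of [U; x] is block diagonal: x is orthogonal to U (hence,
   by skew-symmetry, U to x) and isotropic because B is alternating. *)
Lemma tot_iso_adds_row U x :
  tot_iso B U -> (x <= perp U)%MS -> tot_iso B <<(U + x)%MS>>%MS.
Proof.
rewrite tot_isoE sub_perp => /eqP UBU /eqP xBU; rewrite tot_isoE; apply/eqP.
apply: (gram_sub0 (C := col_mx U x)); first by rewrite genmxE addsmxE.
have UBx : U *m B *m x^T = 0.
  apply/trmx_inj.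
  by rewrite trmx0 !trmx_mul !trmxK trmx_skew mulNmx mulmxN mulmxA xBU oppr0.
have xBx : gram x = 0 by apply/matrixP => i j; rewrite !ord1 [RHS]mxE; exact: Balt.
by rewrite /gram tr_col_mx mul_col_mx mul_col_row -!/(gram _) UBU xBx xBU UBx block_mx0.
Qed.

Definition Pm_sup U m : {set 'M[F]_n} := [set W in Pm B m | (U <= W)%MS].

Lemma inPm U m : (U \in Pm B m) = [&& is_subspace U, \rank U == m & tot_iso B U].
Proof. by rewrite inE. Qed.

Lemma Pm_sup_id U a : U \in Pm B a -> Pm_sup U a = [set U].
Proof.
rewrite inPm => /and3P[sU /eqP rU isoU]; apply/setP => W; rewrite !inE.
apply/idP/eqP => [/andP[/and3P[sW /eqP rW _] UW] | ->].
  by apply/esym/subspace_eq_rank => //; rewrite rU rW.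
by rewrite sU rU eqxx isoU submx_refl.
Qed.

Lemma Pm_sup_trans U X m : (U <= X)%MS ->
  [set W in Pm_sup U m | (X <= W)%MS] = Pm_sup X m.
Proof.
move=> UX; apply/setP => W; rewrite !inE.
by apply/idP/idP => [/andP[/andP[-> _] ->] // | /andP[-> XW]]; rewrite XW (submx_trans UX XW).
Qed.

Lemma Pm_sup_sub U W k : tot_iso B W ->
  [set X in Pm_sup U k | (X <= W)%MS] = subsp_between U W k.
Proof.
move=> isoW; apply/setP => X; rewrite in_subsp_between !inE.
apply/idP/idP => [/andP[/andP[/and3P[-> -> _] ->] ->] // | /and4P[-> -> -> XW]].
by rewrite XW (tot_iso_sub XW isoW).
Qed.

Lemma Pm_succ_sup U : tot_iso B U ->
  Pm_sup U (\rank U).+1 = subsp_between U (perp U) (\rank U).+1.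
Proof.
move=> isoU; apply/setP => X; rewrite in_subsp_between !inE.
apply/idP/idP => [/andP[/and3P[sX -> isoX] UX] | /and4P[sX /eqP rX UX Xp]].
  rewrite sX UX sub_perp; move: UX isoX => /submxP[D ->]; rewrite tot_isoE => /eqP XBX.
  by rewrite /= trmx_mul mulmxA -/(gram X) XBX mul0mx.
rewrite sX rX eqxx UX /= andbT.
have [i xU] : exists i, ~~ (row i X <= U)%MS.
  by apply/row_subPn; apply: contraTN isT => /mxrankS; rewrite rX ltnn.
have <- : <<(U + row i X)%MS>>%MS = X.
  by apply/eqP; rewrite genmx_adds_row_eq // !inE xU row_sub.
by apply: tot_iso_adds_row => //; apply: submx_trans (row_sub i X) Xp.
Qed.

Lemma card_Pm_succ_sup U : tot_iso B U ->
  #|Pm_sup U (\rank U).+1|%:R = gbin #|F| (n - \rank U - \rank U) 1.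
Proof.
by move=> isoU; rewrite Pm_succ_sup // card_between_succ ?tot_iso_sub_perp ?mxrank_perp.
Qed.

End PolarSpace.

Section CountingPm.
Variables (F : finFieldType) (nu : nat) (B : 'M[F]_(2 * nu)).
Hypothesis Balt : alt_form B.
Hypothesis Bnd : nondegen_form B.
Local Notation q := #|F|.
Implicit Types (U : 'M[F]_(2 * nu)).

Lemma card_Pm_sup_add d a U : U \in Pm B a -> (a + d <= nu)%N ->
  #|Pm_sup B U (a + d)|%:R = Nprime q a (a + d) nu.
Proof.
have q1 := card_finNzRing_gt1 F.
elim: d a U => [|d IH] a U PU adnu.
  by rewrite addn0 Pm_sup_id // cards1 Nprime_id.
have := PU; rewrite inPm => /and3P[_ /eqP rU isoU].
set m := (a + d.+1)%N.
have := double_count (Pm_sup B U a.+1) (Pm_sup B U m) (fun X W => (X <= W)%MS).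
move/(congr1 (fun k => k%:R : rat)); rewrite !natr_sum.
rewrite (eq_bigr (fun _ => Nprime q a.+1 m nu)); last first.
  move=> X; rewrite inE => /andP[PX UX].
  by rewrite Pm_sup_trans // /m -addSnnS IH // addSnnS.
rewrite [RHS](eq_bigr (fun _ => gbin q (m - a) 1)); last first.
  move=> W; rewrite !inE => /andP[/and3P[_ /eqP rW isoW] UW].
  by rewrite Pm_sup_sub // -rU card_between_succ // rW rU.
rewrite !sumr_const -(mulr_natl (Nprime _ _ _ _)) -(mulr_natl (gbin _ _ _)).
rewrite -rU card_Pm_succ_sup // rU => cardE.
have gma : gbin q (m - a) 1 != 0 by rewrite gt_eqF // gbin1_gt0 // /m; lia.
apply: (mulIf gma).
have [am mnu] : (a < m)%N /\ (m <= nu)%N by rewrite /m; split; lia.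
rewrite (_ : 2 * nu - a - a = 2 * (nu - a))%N in cardE; last by lia.
by rewrite -cardE Nprime_step // mulrC.
Qed.

Lemma card_Pm_sup a m U : U \in Pm B a -> (m <= nu)%N ->
  #|Pm_sup B U m|%:R = Nprime q a m nu.
Proof.
move=> PU mnu; case: (leqP a m) => [am | ma].
  by rewrite -(subnKC am) card_Pm_sup_add // subnKC.
rewrite /Nprime leqNgt ma /=; apply/eqP; rewrite pnatr_eq0 cards_eq0; apply/eqP/setP => W.
rewrite !inE; apply/negP => /andP[/and3P[_ /eqP rW _] /mxrankS].
by move: PU; rewrite inPm rW => /and3P[_ /eqP -> _]; rewrite leqNgt ma.
Qed.

End CountingPm.

Section Configuration.
Variables (F : finFieldType) (nu : nat) (B : 'M[F]_(2 * nu)).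
Hypothesis Balt : alt_form B.
Hypothesis Bnd : nondegen_form B.
Local Notation q := #|F|.
Implicit Types (M T : 'M[F]_(2 * nu)).

Lemma card_C2_gt M T m2 t : M \in Pm B m2.+1 -> T \in Pm B t -> (T <= M)%MS ->
  (0 < t)%N -> (m2 <= nu)%N -> Nprime q t m2 nu < #|C2 B M T m2|%:R.
Proof.
rewrite inPm => /and3P[sM /eqP rM _] PT TM t0 m2nu.
have T0 : T != 0.
  by move: PT; rewrite inPm -mxrank_eq0 => /and3P[_ /eqP -> _]; rewrite -lt0n.
have [H Hhyp TH] := exists_hyperplane_notsup sM rM TM T0.
have HT : H \notin Pm_sup B T m2 by rewrite inE (negbTE TH) andbF.
rewrite -(card_Pm_sup Balt Bnd PT m2nu) ltr_nat.
apply: leq_trans (subset_leq_card (_ : H |: Pm_sup B T m2 \subset C2 B M T m2)).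
  by rewrite cardsU1 HT.
by apply/subsetP => W; rewrite in_setU1 in_setU => /orP[/eqP -> | ->]; rewrite ?Hhyp ?orbT.
Qed.

Lemma sum_card_sub_Pm_sup T (S : {set 'M[F]_(2 * nu)}) k m :
  (forall P, P \in S -> P \in Pm B k /\ (T <= P)%MS) -> (m <= nu)%N ->
  \sum_(W in Pm_sup B T m) #|[set P in S | (P <= W)%MS]|%:R = #|S|%:R * Nprime q k m nu.
Proof.
move=> PS mnu; rewrite -natr_sum -double_count natr_sum -sum1_card natr_sum mulr_suml.
apply: eq_bigr => P /PS[PP TP]; rewrite Pm_sup_trans // mul1r.
exact: card_Pm_sup.
Qed.

Lemma card_C1_ge M T m1 m2 t : M \in Pm B m2.+1 -> is_subspace T -> \rank T = t ->
  (T <= M)%MS -> (m1 <= nu)%N -> s0 q nu m1 m2.+1 t <= #|C1 B M T m1 t|%:R.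
Proof.
have q1 := card_finNzRing_gt1 F.
rewrite inPm => /and3P[_ /eqP rM isoM] sT rT TM m1nu.
have PM k P : P \in subsp_between T M k -> P \in Pm B k /\ (T <= P)%MS.
  rewrite in_subsp_between inPm => /and4P[-> -> TP PM]; split => //.
  exact: tot_iso_sub PM isoM.
rewrite /s0 -rM -{1 3}rT -card_between_succ // -card_between_succ2 // rT -mulrA.
rewrite -!(sum_card_sub_Pm_sup (PM _)) // mulr_sumr -sumrB.
have -> : C1 B M T m1 t = [set W in Pm_sup B T m1 | (t < \rank (W :&: M))%N].
  by apply/setP => W; rewrite !inE andbA.
rewrite card_setI_sum natr_sum; apply: ler_sum => W; rewrite inE => /andP[_ TW].
have TWM : (T <= W :&: M)%MS by rewrite sub_capmx TW TM.
rewrite !subsp_between_capmx -rT card_between_succ // card_between_succ2 // rT.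
by rewrite -subn_gt0 gbin1_sub_gbin2_le.
Qed.

End Configuration.

Theorem lemma4p1 (F : finFieldType) (nu m1 m2 t : nat) (B : 'M[F]_(2 * nu))
  (Balt : alt_form B) (Bnd : nondegen_form B)
  (ht : (0 < t)%N) (h1 : (t.+1 <= m1 < nu)%N) (h2 : (t.+1 <= m2 < nu)%N)
  (M T : 'M[F]_(2 * nu)) (hM : M \in Pm B m2.+1)
  (hT : is_subspace T) (hTr : \rank T = t) (hTM : (T <= M)%MS) :
  let q := #|F| in
  let c1 : rat := (#|C1 B M T m1 t| * #|C2 B M T m2|)%N%:R in
  s0 q nu m1 m2.+1 t * Nprime q t m2 nu < c1 /\
  ((m1 + 2 * m2 - t + 4 <= 2 * nu)%N ->
   (gbin q (m2 - t + 1) 1 - (q%:R : rat) ^- 2)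
     * Nprime q t.+1 m1 nu * Nprime q t m2 nu < c1).
Proof.
move=> q c1; have q1 := card_finNzRing_gt1 F.
have [[_ m1nu] [_ m2nu]] := (andP h1, andP h2).
have PT : T \in Pm B t.
  move: hM; rewrite !inPm hT hTr eqxx => /and3P[_ _ isoM].
  exact: tot_iso_sub hTM isoM.
have s0_pos := s0_gt0 q1 h1 h2.
have C1_ge := card_C1_ge Balt Bnd hM hT hTr hTM (ltnW m1nu).
have C2_gt := card_C2_gt Balt Bnd hM PT hTM ht (ltnW m2nu).
have c1_gt : s0 q nu m1 m2.+1 t * Nprime q t m2 nu < c1.
  rewrite /c1 natrM; apply: lt_le_trans (ler_wpM2r (ler0n _ _) C1_ge).
  by rewrite ltr_pM2l.
split => // hnu; apply: le_lt_trans c1_gt.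
by rewrite ler_wpM2r ?Nprime_ge0 // s0_ge.
Qed.
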